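(* In the setting of the context, suppose every subcontroller is $u_i=\hat K_iR_i\begin{bmatrix} y_i\\ v_i\end{bmatrix}$ with $R_i=\begin{bmatrix} I&-G_{y_iv_i}\end{bmatrix}$ and $\hat K_i$ a stabilizing controller for $G_{y_iu_i}$, and let $\boldsymbol L$ be an interaction for which $\boldsymbol G_{\rm pre}$ is internally stable. Let $\delta\ge0$ satisfy $\|\boldsymbol G_{\boldsymbol{zv}}(I-\boldsymbol L\boldsymbol G_{\boldsymbol{wv}})^{-1}\boldsymbol L\|_\infty\le\delta$. If for each $i$ $$\|\hat M_{z_id_i}(\hat K_i)\|_\infty\le\alpha_i,\qquad \|\hat M_{w_id_i}(\hat K_i)\|_\infty\le\beta_i,$$ then the closed-loop map $\boldsymbol T_{\boldsymbol{zd}}:\boldsymbol d\mapsto\boldsymbol z$ of the entire network system satisfies $$\|\boldsymbol T_{\boldsymbol{zd}}\|_\infty\le\max_i\alpha_i+\delta\max_i\beta_i.$$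
   Context: For $i=1,\dots,N$, subsystem $G_i$ is a proper real rational transfer matrix with inputs $(v_i,d_i,u_i)$ (interaction, disturbance, control) and outputs $(w_i,z_i,y_i)$ (interaction, evaluation, measurement), $G_{a_ib_i}$ the block from $b_i$ to $a_i$; $v_i$ is measurable. Stacked signals $\boldsymbol v=\mathrm{col}(v_1,\dots,v_N)$ etc.; interaction $\boldsymbol v=\boldsymbol L\boldsymbol w$, $\boldsymbol L$ proper real rational. $\boldsymbol G_{\boldsymbol{wv}}:=\mathrm{diag}(G_{w_iv_i})$, $\boldsymbol G_{\boldsymbol{zv}}:=\mathrm{diag}(G_{z_iv_i})$. The preexisting system $\boldsymbol G_{\rm pre}$ is the loop $\boldsymbol w=\boldsymbol G_{\boldsymbol{wv}}\boldsymbol v$, $\boldsymbol v=\boldsymbol L\boldsymbol w$. All feedback systems are well-posed. $\hat M_{z_id_i}(\hat K_i):=G_{z_id_i}+G_{z_iu_i}\hat K_i(I-G_{y_iu_i}\hat K_i)^{-1}G_{y_id_i}$, $\hat M_{w_id_i}(\hat K_i):=G_{w_id_i}+G_{w_iu_i}\hat K_i(I-G_{y_iu_i}\hat K_i)^{-1}G_{y_id_i}$. $\hat K_i$ is a stabilizing controller for $G_{y_iu_i}$ if the positive feedback loop $y_i=G_{y_iu_i}u_i$, $u_i=\hat K_iy_i$ is internally stable. $\|\cdot\|_\infty$ is the $\mathcal H_\infty$-norm. *)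

From HB Require Import structures.
From mathcomp Require Import all_boot all_order all_algebra.
From mathcomp Require Import fraction.
Set Implicit Arguments. Unset Strict Implicit. Unset Printing Implicit Defensive.
Import Order.TTheory GRing.Theory Num.Theory.
Local Open Scope ring_scope.

(* Transfer functions are elements of the field of rational functions over a
   numeric closed field C (playing the role of the complex numbers); the
   Laplace variable s ranges over C. *)
Notation ratf C := {fraction {poly C}}.

Section TF.
Variable C : numClosedFieldType.

Definition rat_repr (f : ratf C) (p q : {poly C}) :=
  q != 0 /\ f = (tofrac p) / (tofrac q).

Definition real_rat (f : ratf C) :=
  exists p q, rat_repr f p q /\ p \is a polyOver Num.real /\ q \is a polyOver Num.real.

Definition proper_rat (f : ratf C) :=
  exists p q, rat_repr f p q /\ (size p <= size q)%N.

Definition nopole (f : ratf C) (s : C) :=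
  exists p q, rat_repr f p q /\ q.[s] != 0.

Definition has_value (f : ratf C) (s c : C) :=
  exists p q, rat_repr f p q /\ q.[s] != 0 /\ c = p.[s] / q.[s].

(* stable (element of RH_infinity): proper, no poles in closed right half plane *)
Definition stable_rat (f : ratf C) :=
  proper_rat f /\ forall s : C, 0 <= 'Re s -> nopole f s.

Definition real_rat_mx m n (G : 'M[ratf C]_(m, n)) := forall i j, real_rat (G i j).
Definition proper_mx m n (G : 'M[ratf C]_(m, n)) := forall i j, proper_rat (G i j).
Definition stable_mx m n (G : 'M[ratf C]_(m, n)) := forall i j, stable_rat (G i j).
Definition mx_value m n (G : 'M[ratf C]_(m, n)) (s : C) (A : 'M[C]_(m, n)) :=
  forall i j, has_value (G i j) s (A i j).

Definition vnorm2 n (x : 'cV[C]_n) : C := \sum_i `|x i 0| ^+ 2.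

(* ||G||_oo <= gamma, where ||G||_oo = sup_w sigma_max(G(jw)) for G in RH_oo
   (and +oo for G not in RH_oo). sigma_max(A) <= gamma is written out as the
   induced 2-norm bound |A x|^2 <= gamma^2 |x|^2. *)
Definition hinf_le m n (G : 'M[ratf C]_(m, n)) (gamma : C) :=
  0 <= gamma /\ stable_mx G /\
  forall w : C, w \is Num.real ->
  forall A : 'M[C]_(m, n), mx_value G (w * 'i) A ->
  forall x : 'cV[C]_n, vnorm2 (A *m x) <= gamma ^+ 2 * vnorm2 x.

(* K stabilizing controller for G in the positive feedback loop
   y = G u + e1, u = K y + e2: the loop map (e1,e2) |-> (y,u) exists and is stable. *)
Definition int_stable_loop m n (G : 'M[ratf C]_(m, n)) (K : 'M[ratf C]_(n, m)) :=
  let M := block_mx (1%:M : 'M_m) (- G) (- K) (1%:M : 'M_n) in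
  M \in unitmx /\ stable_mx (invmx M).

Definition Mhat ma md mu my (Gad : 'M[ratf C]_(ma, md)) (Gau : 'M[ratf C]_(ma, mu))
  (Gyd : 'M[ratf C]_(my, md)) (Gyu : 'M[ratf C]_(my, mu)) (K : 'M[ratf C]_(mu, my)) :=
  Gad + Gau *m K *m invmx (1%:M - Gyu *m K) *m Gyd.

Definition bdiag N (p q : 'I_N -> nat) (B : forall i, 'M[ratf C]_(p i, q i)) :
  'M[ratf C]_(\sum_i p i, \sum_i q i) :=
  mxblock (fun i j => if i == j then conform_mx 0 (B i) else 0).

End TF.

(* max_i a_i (folded from 0; all a_i are >= 0 in the application) *)
Definition bigmax (C : numClosedFieldType) N (a : 'I_N -> C) : C :=
  \big[Num.max/0]_(i < N) a i.

From HB Require Import structures.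
From mathcomp Require Import all_boot all_order all_algebra.
From mathcomp Require Import fraction.
From mathcomp Require Import ring.
Import Order.TTheory GRing.Theory Num.Theory.
Local Open Scope ring_scope.
Set Implicit Arguments. Unset Strict Implicit. Unset Printing Implicit Defensive.

(* The argument has an algebraic half and an analytic half.
   - Algebra (transfer-function level): with the controllers
     u_i = K_i [I, -G_{y_i v_i}] [y_i; v_i] the local loop cancels the
     interaction through y_i, so u_i = K_i (I - G_{y_i u_i} K_i)^-1 G_{y_i d_i} d_i
     and w = G_wv v + M_w d, z = G_zv v + M_z d with the block-diagonal maps
     M_w = diag(Mhat_{w_i d_i}), M_z = diag(Mhat_{z_i d_i}).  Solving v = L w
     gives the closed-loop identity  T = M_z + G_zv (I - L G_wv)^-1 L M_w.
   - Analysis: the relation "||G||_oo <= gamma" is closed under sums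
     (gamma_1 + gamma_2), products (gamma_1 gamma_2) and block-diagonal
     assembly (max_i gamma_i). *)

Section Evaluation.
Variable C : numClosedFieldType.
Implicit Types (f g : ratf C) (s : C).

Lemma tofrac_neq0 (q : {poly C}) : q != 0 -> tofrac q != 0 :> ratf C.
Proof. by rewrite tofrac_eq0. Qed.

Lemma has_value_uniq f s a b : has_value f s a -> has_value f s b -> a = b.
Proof.
move=> [p [q [[q0 ->] [qs ->]]]] [p' [q' [[q0' e] [qs' ->]]]].
move/eqP: e; rewrite eqr_div ?tofrac_neq0 // -!tofracM tofrac_eq.
move=> /eqP /(congr1 (horner^~ s)); rewrite !hornerM => cross.
by apply/eqP; rewrite eqr_div // cross.
Qed.

Lemma has_valueD f g s a b :
  has_value f s a -> has_value g s b -> has_value (f + g) s (a + b).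
Proof.
move=> [p [q [[q0 ->] [qs ->]]]] [p' [q' [[q0' ->] [qs' ->]]]].
exists (p * q' + p' * q), (q * q'); split; [split|split].
- by rewrite mulf_neq0.
- by rewrite tofracD !tofracM addf_div ?tofrac_neq0.
- by rewrite hornerM mulf_neq0.
- by rewrite hornerD !hornerM addf_div.
Qed.

Lemma has_valueM f g s a b :
  has_value f s a -> has_value g s b -> has_value (f * g) s (a * b).
Proof.
move=> [p [q [[q0 ->] [qs ->]]]] [p' [q' [[q0' ->] [qs' ->]]]].
exists (p * p'), (q * q'); split; [split|split].
- by rewrite mulf_neq0.
- by rewrite !tofracM mulf_div.
- by rewrite hornerM mulf_neq0.
- by rewrite !hornerM mulf_div.
Qed.

Lemma has_value0 s : has_value 0 s 0.
Proof.
exists 0, 1; split; [split|split].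
- exact: oner_neq0.
- by rewrite tofrac0 mul0r.
- by rewrite hornerC oner_neq0.
- by rewrite horner0 mul0r.
Qed.

Lemma nopoleP f s : nopole f s <-> exists a, has_value f s a.
Proof.
split=> [[p [q [r qs]]]|[a [p [q [r [qs _]]]]]]; last by exists p, q.
by exists (p.[s] / q.[s]), p, q.
Qed.

Lemma mx_valueD m n (A B : 'M[ratf C]_(m, n)) s a b :
  mx_value A s a -> mx_value B s b -> mx_value (A + B) s (a + b).
Proof. by move=> hA hB i j; rewrite !mxE; apply: has_valueD. Qed.

Lemma mx_valueM m n k (A : 'M[ratf C]_(m, n)) (B : 'M[ratf C]_(n, k)) s a b :
  mx_value A s a -> mx_value B s b -> mx_value (A *m B) s (a *m b).
Proof.
move=> hA hB i j; rewrite !mxE.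
apply: (big_ind2 (fun x y => has_value x s y)); first exact: has_value0.
  by move=> x1 x2 y1 y2; apply: has_valueD.
by move=> l _; apply: has_valueM.
Qed.

Lemma mx_value_uniq m n (A : 'M[ratf C]_(m, n)) s a b :
  mx_value A s a -> mx_value A s b -> a = b.
Proof. by move=> ha hb; apply/matrixP => i j; apply: has_value_uniq (ha i j) (hb i j). Qed.

End Evaluation.

Section Stability.
Variable C : numClosedFieldType.
Implicit Types (f g : ratf C).

Lemma proper_add f g : proper_rat f -> proper_rat g -> proper_rat (f + g).
Proof.
move=> [p [q [[q0 ->] sz]]] [p' [q' [[q0' ->] sz']]].
exists (p * q' + p' * q), (q * q'); split; first split.
- by rewrite mulf_neq0.
- by rewrite tofracD !tofracM addf_div ?tofrac_neq0.
rewrite size_mul //; apply: leq_trans (size_polyD _ _) _; rewrite geq_max.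
apply/andP; split; apply: leq_trans (size_polyMleq _ _) _; rewrite -!subn1 leq_sub2r //.
  exact: leq_add.
by rewrite addnC leq_add2l.
Qed.

Lemma proper_mul f g : proper_rat f -> proper_rat g -> proper_rat (f * g).
Proof.
move=> [p [q [[q0 ->] sz]]] [p' [q' [[q0' ->] sz']]].
exists (p * p'), (q * q'); split; first split.
- by rewrite mulf_neq0.
- by rewrite !tofracM mulf_div.
rewrite [size (q * q')]size_mul //; apply: leq_trans (size_polyMleq _ _) _.
by rewrite -!subn1 leq_sub2r // leq_add.
Qed.

Lemma stable_add f g : stable_rat f -> stable_rat g -> stable_rat (f + g).
Proof.
move=> [pf hf] [pg hg]; split; first exact: proper_add.
move=> s hs; have [a ha] := (nopoleP f s).1 (hf s hs).
have [b hb] := (nopoleP g s).1 (hg s hs).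
by apply/nopoleP; exists (a + b); apply: has_valueD.
Qed.

Lemma stable_mul f g : stable_rat f -> stable_rat g -> stable_rat (f * g).
Proof.
move=> [pf hf] [pg hg]; split; first exact: proper_mul.
move=> s hs; have [a ha] := (nopoleP f s).1 (hf s hs).
have [b hb] := (nopoleP g s).1 (hg s hs).
by apply/nopoleP; exists (a * b); apply: has_valueM.
Qed.

Lemma stable0 : stable_rat (0 : ratf C).
Proof.
split; last by move=> s _; apply/nopoleP; exists 0; apply: has_value0.
exists 0, 1; split; last by rewrite size_poly0.
by split; [exact: oner_neq0 | rewrite tofrac0 mul0r].
Qed.

Lemma stable_mxD m n (A B : 'M[ratf C]_(m, n)) :
  stable_mx A -> stable_mx B -> stable_mx (A + B).
Proof. by move=> hA hB i j; rewrite mxE; apply: stable_add. Qed.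

Lemma stable_mxM m n k (A : 'M[ratf C]_(m, n)) (B : 'M[ratf C]_(n, k)) :
  stable_mx A -> stable_mx B -> stable_mx (A *m B).
Proof.
move=> hA hB i j; rewrite mxE; apply: big_ind => //; first exact: stable0.
  by move=> x y; apply: stable_add.
by move=> l _; apply: stable_mul.
Qed.

Lemma stable_mx_value m n (A : 'M[ratf C]_(m, n)) s :
  stable_mx A -> 0 <= 'Re s -> exists a, mx_value A s a.
Proof.
move=> hA hs.
have rows i : exists ai : 'I_n -> C, forall j, has_value (A i j) s (ai j).
  by apply: (@fin_all_exists _ (fun=> C) (fun j c => has_value (A i j) s c)) => j; apply/nopoleP; apply: (hA i j).2.
have [F hF] := @fin_all_exists _ (fun=> 'I_n -> C) _ rows.
by exists (\matrix_(i, j) F i j) => i j; rewrite mxE.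
Qed.

(* The imaginary axis, where the H-infinity norm is measured, lies in the
   closed right half plane. *)
Lemma Re_imaginary_axis (w : C) : w \is Num.real -> 0 <= 'Re (w * 'i).
Proof. by move=> wr; rewrite (ReMl wr) Re_i mulr0. Qed.

End Stability.

(* Block-diagonal matrices over an arbitrary ring; on rational matrices this is
   (convertibly) the [bdiag] of the statement, on complex matrices it assembles
   the values of the blocks at a point. *)
Definition blockdiag (R : pzRingType) N (p q : 'I_N -> nat)
    (B : forall i, 'M[R]_(p i, q i)) : 'M[R]_(\sum_i p i, \sum_i q i) :=
  mxblock (fun i j => if i == j then conform_mx 0 (B i) else 0).

Lemma blockdiag_mul (R : pzRingType) N (p q : 'I_N -> nat)
    (B : forall i, 'M[R]_(p i, q i)) k (x : 'M[R]_(\sum_i q i, k)) i :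
  submxcol (blockdiag B *m x) i = B i *m submxcol x i.
Proof.
rewrite -{1}[x]submxcolK /blockdiag mul_mxblock_mxrow mxcolK (bigD1 i) //=.
rewrite eqxx conform_mx_id big1 ?addr0 // => j /negbTE.
by rewrite eq_sym => ->; exact: mul0mx.
Qed.

Lemma conform_mx_rel (T1 T2 : Type) (rel : T1 -> T2 -> Prop) m n m' n'
    (B1 : 'M[T1]_(m, n)) (B2 : 'M[T2]_(m, n))
    (A1 : 'M[T1]_(m', n')) (A2 : 'M[T2]_(m', n')) :
  (forall a b, rel (B1 a b) (B2 a b)) -> (forall a b, rel (A1 a b) (A2 a b)) ->
  forall a b, rel (conform_mx B1 A1 a b) (conform_mx B2 A2 a b).
Proof.
move=> relB relA a b.
have [em|nm] := eqVneq m' m; last by rewrite !nonconform_mx ?nm.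
have [en|nn] := eqVneq n' n; last by rewrite !nonconform_mx ?nn ?orbT.
by subst; rewrite !conform_mx_id.
Qed.

Lemma blockdiag_rel (R1 R2 : pzRingType) (rel : R1 -> R2 -> Prop) N
    (p q : 'I_N -> nat) (B1 : forall i, 'M[R1]_(p i, q i))
    (B2 : forall i, 'M[R2]_(p i, q i)) :
  rel 0 0 -> (forall i a b, rel (B1 i a b) (B2 i a b)) ->
  forall k l, rel (blockdiag B1 k l) (blockdiag B2 k l).
Proof.
move=> rel0 relB k l; rewrite !mxE; case: eqP => _; last by rewrite !mxE.
by apply: conform_mx_rel => a b; rewrite ?mxE.
Qed.

Section EuclideanNorm.
Variable C : numClosedFieldType.

Lemma vnorm2_ge0 n (x : 'cV[C]_n) : 0 <= vnorm2 x.
Proof. by apply: sumr_ge0 => i _; apply: exprn_ge0. Qed.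

Lemma vnorm2_eq0 n (x : 'cV[C]_n) : vnorm2 x <= 0 -> x = 0.
Proof.
move=> h; have /eqP x0 : vnorm2 x == 0 by rewrite eq_le h vnorm2_ge0.
have := psumr_eq0P (fun i _ => exprn_ge0 2 (normr_ge0 (x i 0))) x0 => H.
apply/matrixP => i j; rewrite (ord1 j) mxE.
by have /eqP := H i isT; rewrite expf_eq0 /= normr_eq0 => /eqP.
Qed.

Lemma vnorm2_blocks N (p : 'I_N -> nat) (x : 'cV[C]_(\sum_i p i)) :
  vnorm2 x = \sum_i vnorm2 (submxcol x i).
Proof.
rewrite /vnorm2 sig_big_dep /= (reindex _ tagnat.rank_bij_on) /=.
by apply: eq_bigr => -[i j] _; rewrite !mxE /= tagnat.rankE.
Qed.

(* |p + q|^2 <= (1 + t)|p|^2 + (1 + 1/t)|q|^2, the slack being |t p - q|^2 / t. *)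
Lemma normC_add_sq (p q t : C) : 0 < t ->
  `|p + q| ^+ 2 <= (1 + t) * `|p| ^+ 2 + (1 + t^-1) * `|q| ^+ 2.
Proof.
move=> t0; rewrite -subr_ge0.
have tr : t^* = t by apply: conj_Creal; apply: gtr0_real.
have -> : (1 + t) * `|p| ^+ 2 + (1 + t^-1) * `|q| ^+ 2 - `|p + q| ^+ 2
    = `|t * p - q| ^+ 2 / t.
  rewrite !normCK !rmorphD rmorphN !rmorphM /= tr.
  by field; rewrite gt_eqF.
by rewrite divr_ge0 ?exprn_ge0 ?normr_ge0 ?ltW.
Qed.

Lemma vnorm2_add n (u v : 'cV[C]_n) (t : C) : 0 < t ->
  vnorm2 (u + v) <= (1 + t) * vnorm2 u + (1 + t^-1) * vnorm2 v.
Proof.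
move=> t0; rewrite /vnorm2 !mulr_sumr -big_split /=.
by apply: ler_sum => i _; rewrite mxE; apply: normC_add_sq.
Qed.

(* If |u|^2 <= a^2 X and |v|^2 <= b^2 X then |u + v|^2 <= (a + b)^2 X;
   for a, b > 0 take t = b / a above, otherwise one vector vanishes. *)
Lemma vnorm2_add_le n (u v : 'cV[C]_n) (a b X : C) : 0 <= a -> 0 <= b ->
  vnorm2 u <= a ^+ 2 * X -> vnorm2 v <= b ^+ 2 * X ->
  vnorm2 (u + v) <= (a + b) ^+ 2 * X.
Proof.
rewrite le0r => /orP [/eqP-> _ | a0]; first
  by rewrite expr0n /= mul0r add0r => /vnorm2_eq0 -> hv; rewrite add0r.
rewrite le0r => /orP [/eqP-> | b0]; first
  by rewrite expr0n /= mul0r addr0 => hu /vnorm2_eq0 ->; rewrite addr0.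
move=> hu hv; have t0 : 0 < b / a by apply: divr_gt0.
apply: le_trans (vnorm2_add u v t0) _.
have -> : (a + b) ^+ 2 * X
    = (1 + b / a) * (a ^+ 2 * X) + (1 + (b / a)^-1) * (b ^+ 2 * X).
  by field; rewrite !gt_eqF.
by rewrite lerD // ler_wpM2l // addr_ge0 ?invr_ge0 // ltW.
Qed.

End EuclideanNorm.

(* Nonnegative elements are comparable, so [bigmax] is an upper bound. *)
Section BigMax.
Variable C : numClosedFieldType.

Lemma bigmax_seq (I : eqType) (s : seq I) (F : I -> C) : (forall i, 0 <= F i) ->
  0 <= \big[Num.max/0]_(j <- s) F j /\
  forall i, i \in s -> F i <= \big[Num.max/0]_(j <- s) F j.
Proof.
move=> F0; elim: s => [|x s [m0 ub]]; first by rewrite big_nil.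
rewrite big_cons; have cmp : (F x >=< \big[Num.max/0]_(j <- s) F j)%O.
  by apply: real_comparable; apply: ger0_real.
have [le_xm le_mm] : F x <= Num.max (F x) (\big[Num.max/0]_(j <- s) F j) /\
    \big[Num.max/0]_(j <- s) F j <= Num.max (F x) (\big[Num.max/0]_(j <- s) F j).
  by rewrite !comparable_le_max // ?lexx ?orbT // comparable_sym.
split; first exact: le_trans m0 le_mm.
by move=> i; rewrite inE => /orP [/eqP -> // | /ub /le_trans]; apply.
Qed.

Lemma bigmax_ge0 N (a : 'I_N -> C) : (forall i, 0 <= a i) -> 0 <= bigmax a.
Proof. by move=> a0; have [] := bigmax_seq (index_enum 'I_N) a0. Qed.

Lemma bigmax_ub N (a : 'I_N -> C) i : (forall i, 0 <= a i) -> a i <= bigmax a.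
Proof.
by move=> a0; have [_ ub] := bigmax_seq (index_enum 'I_N) a0; rewrite ub ?mem_index_enum.
Qed.

End BigMax.

Section HinfCalculus.
Variable C : numClosedFieldType.

Lemma blockdiag_gain N (p q : 'I_N -> nat) (A : forall i, 'M[C]_(p i, q i))
    (a : 'I_N -> C) (m : C) :
  (forall i, 0 <= a i) -> (forall i, a i <= m) ->
  (forall i (x : 'cV[C]_(q i)), vnorm2 (A i *m x) <= a i ^+ 2 * vnorm2 x) ->
  forall x, vnorm2 (blockdiag A *m x) <= m ^+ 2 * vnorm2 x.
Proof.
move=> a0 am gainA x; rewrite vnorm2_blocks (vnorm2_blocks x) mulr_sumr.
apply: ler_sum => i _; rewrite blockdiag_mul; apply: le_trans (gainA i _) _.
by rewrite ler_wpM2r ?vnorm2_ge0 // ler_pXn2r ?nnegrE ?(le_trans (a0 i)).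
Qed.

Lemma hinf_le_add m n (A B : 'M[ratf C]_(m, n)) a b :
  hinf_le A a -> hinf_le B b -> hinf_le (A + B) (a + b).
Proof.
move=> [a0 [stA gainA]] [b0 [stB gainB]].
split; first exact: addr_ge0.
split; first exact: stable_mxD.
move=> w wr AB valAB x; have axis := Re_imaginary_axis wr.
have [vA valA] := stable_mx_value stA axis.
have [vB valB] := stable_mx_value stB axis.
rewrite (mx_value_uniq valAB (mx_valueD valA valB)) mulmxDl.
exact: vnorm2_add_le (gainA w wr _ valA x) (gainB w wr _ valB x).
Qed.

Lemma hinf_le_mul m n k (A : 'M[ratf C]_(m, n)) (B : 'M[ratf C]_(n, k)) a b :
  hinf_le A a -> hinf_le B b -> hinf_le (A *m B) (a * b).
Proof.
move=> [a0 [stA gainA]] [b0 [stB gainB]].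
split; first exact: mulr_ge0.
split; first exact: stable_mxM.
move=> w wr AB valAB x; have axis := Re_imaginary_axis wr.
have [vA valA] := stable_mx_value stA axis.
have [vB valB] := stable_mx_value stB axis.
rewrite (mx_value_uniq valAB (mx_valueM valA valB)) -mulmxA.
apply: le_trans (gainA w wr _ valA _) _.
rewrite exprMn -[X in _ <= X]mulrA; apply: ler_wpM2l; [exact: exprn_ge0 | exact: gainB w wr _ valB x].
Qed.

Lemma hinf_le_bdiag N (p q : 'I_N -> nat) (B : forall i, 'M[ratf C]_(p i, q i))
    (a : 'I_N -> C) :
  (forall i, hinf_le (B i) (a i)) -> hinf_le (bdiag B) (bigmax a).
Proof.
move=> hB; have a0 i : 0 <= a i := (hB i).1.
split; first exact: bigmax_ge0.
split.
  move=> k l; exact: (@blockdiag_rel _ _ (fun f (_ : ratf C) => stable_rat f)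
                        _ _ _ B B (stable0 C) (fun i => (hB i).2.1) k l).
move=> w wr A valA x; have axis := Re_imaginary_axis wr.
have [vB valB] : exists vB : forall i, 'M[C]_(p i, q i),
    forall i, mx_value (B i) (w * 'i) (vB i).
  apply: (@fin_all_exists _ (fun i => 'M[C]_(p i, q i))
            (fun i b => mx_value (B i) (w * 'i) b)) => i.
  exact: stable_mx_value (hB i).2.1 axis.
have valBD : mx_value (bdiag B) (w * 'i) (blockdiag vB).
  move=> k l; exact: (@blockdiag_rel _ _ (fun f c => has_value f (w * 'i) c)
                        _ _ _ B vB (has_value0 _) valB k l).
rewrite (mx_value_uniq valA valBD).
apply: blockdiag_gain => [// | i | i y]; first exact: bigmax_ub.
exact: (hB i).2.2 w wr _ (valB i) y.
Qed.

End HinfCalculus.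

Section LoopAlgebra.
Variable R : comUnitRingType.

(* Internal stability of the positive loop (G, K) makes both return differences
   I - K G and I - G K invertible: factor the loop matrix in block-triangular
   form in the two possible orders. *)
Lemma loop_units m n (G : 'M[R]_(m, n)) (K : 'M[R]_(n, m)) :
  block_mx 1%:M (- G) (- K) 1%:M \in unitmx ->
  (1%:M - K *m G \in unitmx) /\ (1%:M - G *m K \in unitmx).
Proof.
have factorKG : block_mx 1%:M (- G) (- K) 1%:M
    = block_mx 1%:M 0 (- K) 1%:M *m block_mx 1%:M (- G) 0 (1%:M - K *m G).
  rewrite mulmx_block ?mul1mx ?mul0mx ?mulmx1 ?mulmx0 ?addr0 ?add0r.
  by rewrite mulmxN mulNmx opprK addrC subrK.
have factorGK : block_mx 1%:M (- G) (- K) 1%:M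
    = block_mx 1%:M (- G) 0 1%:M *m block_mx (1%:M - G *m K) 0 (- K) 1%:M.
  rewrite mulmx_block ?mul1mx ?mul0mx ?mulmx1 ?mulmx0 ?addr0 ?add0r.
  by rewrite mulNmx mulmxN opprK subrK.
rewrite !unitmxE => unit_loop; split.
  by move: unit_loop; rewrite factorKG det_mulmx det_lblock det_ublock !det1 !mul1r.
by move: unit_loop; rewrite factorGK det_mulmx det_lblock det_ublock !det1 !mul1r mulr1.
Qed.

(* The local controller u = K [I, -G_yv] [y; v] with y = G_yv v + G_yd d + G_yu u
   is solved by u = K (I - G_yu K)^-1 G_yd d: the measured interaction v cancels. *)
Lemma local_controller_solution a b c e k (K : 'M[R]_(a, b)) (Gyu : 'M[R]_(b, a))
    (Gyd : 'M[R]_(b, c)) (Gyv : 'M[R]_(b, e)) (d : 'M[R]_(c, k)) (v : 'M[R]_(e, k)) :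
  1%:M - Gyu *m K \in unitmx ->
  let u := K *m invmx (1%:M - Gyu *m K) *m Gyd *m d in
  u = K *m (row_mx 1%:M (- Gyv) *m col_mx (Gyv *m v + Gyd *m d + Gyu *m u) v).
Proof.
move=> unitX u; rewrite mul_row_col mul1mx mulNmx [_ - Gyv *m v]addrC !addrA addNr add0r.
rewrite /u -!mulmxA.
congr (K *m _); set f := Gyd *m d; set g := invmx _ *m f.
have Xg : (1%:M - Gyu *m K) *m g = f by rewrite mulKVmx.
by rewrite -[f in f + _]Xg mulmxBl mul1mx mulmxA subrK.
Qed.

Lemma interconnection_solution m n k (L : 'M[R]_(m, n)) (P : 'M[R]_(n, m))
    (f : 'M[R]_(n, k)) :
  1%:M - L *m P \in unitmx ->
  invmx (1%:M - L *m P) *m L *m f = L *m (P *m (invmx (1%:M - L *m P) *m L *m f) + f).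
Proof.
move=> unitY; set v := invmx _ *m L *m f.
have Yv : (1%:M - L *m P) *m v = L *m f by rewrite /v -!mulmxA mulKVmx.
by move: Yv; rewrite mulmxBl mul1mx mulmxDr mulmxA => <-; rewrite addrC subrK.
Qed.

End LoopAlgebra.

Lemma mxcol_blockdiag (R : pzRingType) N (p q r : 'I_N -> nat)
    (G : forall i, 'M[R]_(p i, q i)) (M : forall i, 'M[R]_(p i, r i)) k
    (v : 'M[R]_(\sum_i q i, k)) (d : 'M[R]_(\sum_i r i, k)) :
  \mxcol_i (G i *m submxcol v i + M i *m submxcol d i)
  = blockdiag G *m v + blockdiag M *m d.
Proof. by apply/mxcolP => i; rewrite mxcolK submxcolD !blockdiag_mul. Qed.

Lemma mx_eq_on_columns (R : pzSemiRingType) m n (A B : 'M[R]_(m, n)) :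
  (forall x : 'cV[R]_n, A *m x = B *m x) -> A = B.
Proof.
move=> AB; apply/matrixP => a b; have := AB (delta_mx b 0); rewrite -!colE.
by move/(congr1 (fun M : 'cV[R]_m => M a 0)); rewrite !mxE.
Qed.

Lemma Mhat_mul (C : numClosedFieldType) ma md mu my
    (Gad : 'M[ratf C]_(ma, md)) (Gau : 'M[ratf C]_(ma, mu)) (Gyd : 'M[ratf C]_(my, md))
    (Gyu : 'M[ratf C]_(my, mu)) (K : 'M[ratf C]_(mu, my)) k (d : 'M[ratf C]_(md, k)) :
  Mhat Gad Gau Gyd Gyu K *m d
  = Gad *m d + Gau *m (K *m invmx (1%:M - Gyu *m K) *m Gyd *m d).
Proof. by rewrite /Mhat mulmxDl !mulmxA. Qed.

Section NetworkClosedLoop.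
Variables (C : numClosedFieldType) (N : nat) (nv nd nu nw nz ny : 'I_N -> nat).
Variables (Gwv : forall i, 'M[ratf C]_(nw i, nv i)) (Gwd : forall i, 'M[ratf C]_(nw i, nd i))
  (Gwu : forall i, 'M[ratf C]_(nw i, nu i)).
Variables (Gzv : forall i, 'M[ratf C]_(nz i, nv i)) (Gzd : forall i, 'M[ratf C]_(nz i, nd i))
  (Gzu : forall i, 'M[ratf C]_(nz i, nu i)).
Variables (Gyv : forall i, 'M[ratf C]_(ny i, nv i)) (Gyd : forall i, 'M[ratf C]_(ny i, nd i))
  (Gyu : forall i, 'M[ratf C]_(ny i, nu i)).
Variables (Khat : forall i, 'M[ratf C]_(nu i, ny i)) (L : 'M[ratf C]_(\sum_i nv i, \sum_i nw i)).

Hypothesis Khat_unit : forall i, 1%:M - Gyu i *m Khat i \in unitmx.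
Hypothesis L_unit : 1%:M - L *m bdiag Gwv \in unitmx.

Definition network_eqs (d : 'cV[ratf C]_(\sum_i nd i)) (v : 'cV[ratf C]_(\sum_i nv i))
    (w : 'cV[ratf C]_(\sum_i nw i)) (z : 'cV[ratf C]_(\sum_i nz i))
    (y : 'cV[ratf C]_(\sum_i ny i)) (u : 'cV[ratf C]_(\sum_i nu i)) :=
  forall i,
  [/\ submxcol w i = Gwv i *m submxcol v i + Gwd i *m submxcol d i
                     + Gwu i *m submxcol u i,
      submxcol z i = Gzv i *m submxcol v i + Gzd i *m submxcol d i
                     + Gzu i *m submxcol u i,
      submxcol y i = Gyv i *m submxcol v i + Gyd i *m submxcol d i
                     + Gyu i *m submxcol u i &
      submxcol u i = Khat i *m (row_mx 1%:M (- Gyv i)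
                                  *m col_mx (submxcol y i) (submxcol v i))].

Definition Mz := bdiag (fun i => Mhat (Gzd i) (Gzu i) (Gyd i) (Gyu i) (Khat i)).
Definition Mw := bdiag (fun i => Mhat (Gwd i) (Gwu i) (Gyd i) (Gyu i) (Khat i)).
Definition Dnet := bdiag Gzv *m invmx (1%:M - L *m bdiag Gwv) *m L.

(* For every disturbance d the network has a solution whose evaluation output
   is (M_z + D M_w) d: close each local loop, then solve the interconnection. *)
Lemma network_response d : exists v w z y u,
  [/\ network_eqs d v w z y u, v = L *m w & z = (Mz + Dnet *m Mw) *m d].
Proof.
pose u := \mxcol_i (Khat i *m invmx (1%:M - Gyu i *m Khat i) *m Gyd i *m submxcol d i).
pose v := invmx (1%:M - L *m bdiag Gwv) *m L *m (Mw *m d).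
pose w := \mxcol_i (Gwv i *m submxcol v i
                     + Mhat (Gwd i) (Gwu i) (Gyd i) (Gyu i) (Khat i) *m submxcol d i).
pose z := \mxcol_i (Gzv i *m submxcol v i
                     + Mhat (Gzd i) (Gzu i) (Gyd i) (Gyu i) (Khat i) *m submxcol d i).
pose y := \mxcol_i (Gyv i *m submxcol v i + Gyd i *m submxcol d i
                     + Gyu i *m submxcol u i).
have w_eq : w = bdiag Gwv *m v + Mw *m d by rewrite /w mxcol_blockdiag.
have z_eq : z = bdiag Gzv *m v + Mz *m d by rewrite /z mxcol_blockdiag.
exists v, w, z, y, u; split.
- move=> i; rewrite /w /z /y !mxcolK !Mhat_mul !addrA; split => //.
  exact: local_controller_solution (Khat_unit i).
- by rewrite w_eq; apply: interconnection_solution.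
- by rewrite z_eq /v /Dnet mulmxDl !mulmxA addrC.
Qed.

Lemma closed_loop_identity (T : 'M[ratf C]_(\sum_i nz i, \sum_i nd i)) :
  (forall d v w z y u, network_eqs d v w z y u -> v = L *m w -> z = T *m d) ->
  T = Mz + Dnet *m Mw.
Proof.
move=> closed_loop; apply: mx_eq_on_columns => d.
have [v [w [z [y [u [eqs vLw zE]]]]]] := network_response d.
by rewrite -zE (closed_loop d v w z y u eqs vLw).
Qed.

End NetworkClosedLoop.

Theorem proposition4 (C : numClosedFieldType) (N : nat)
  (nv nd nu nw nz ny : 'I_N -> nat)
  (Gwv : forall i, 'M[ratf C]_(nw i, nv i)) (Gwd : forall i, 'M[ratf C]_(nw i, nd i))
  (Gwu : forall i, 'M[ratf C]_(nw i, nu i))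
  (Gzv : forall i, 'M[ratf C]_(nz i, nv i)) (Gzd : forall i, 'M[ratf C]_(nz i, nd i))
  (Gzu : forall i, 'M[ratf C]_(nz i, nu i))
  (Gyv : forall i, 'M[ratf C]_(ny i, nv i)) (Gyd : forall i, 'M[ratf C]_(ny i, nd i))
  (Gyu : forall i, 'M[ratf C]_(ny i, nu i))
  (Khat : forall i, 'M[ratf C]_(nu i, ny i))
  (L : 'M[ratf C]_(\sum_i nv i, \sum_i nw i))
  (alpha beta : 'I_N -> C) (delta : C)
  (T : 'M[ratf C]_(\sum_i nz i, \sum_i nd i))
  (* each G_i is a proper real rational transfer matrix (all its blocks) *)
  (hG : forall i,
      (real_rat_mx (Gwv i) /\ real_rat_mx (Gwd i) /\ real_rat_mx (Gwu i) /\
       real_rat_mx (Gzv i) /\ real_rat_mx (Gzd i) /\ real_rat_mx (Gzu i) /\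
       real_rat_mx (Gyv i) /\ real_rat_mx (Gyd i) /\ real_rat_mx (Gyu i)) /\
      (proper_mx (Gwv i) /\ proper_mx (Gwd i) /\ proper_mx (Gwu i) /\
       proper_mx (Gzv i) /\ proper_mx (Gzd i) /\ proper_mx (Gzu i) /\
       proper_mx (Gyv i) /\ proper_mx (Gyd i) /\ proper_mx (Gyu i)))
  (* the controllers are proper real rational and stabilize G_{y_i u_i} *)
  (hKrat : forall i, real_rat_mx (Khat i) /\ proper_mx (Khat i))
  (hKstab : forall i, int_stable_loop (Gyu i) (Khat i))
  (* the interaction L is proper real rational and G_pre is internally stable *)
  (hL : real_rat_mx L /\ proper_mx L)
  (hpre : int_stable_loop (bdiag Gwv) L)
  (hdelta0 : 0 <= delta)
  (hdelta : hinf_le (bdiag Gzv *m invmx (1%:M - L *m bdiag Gwv) *m L) delta)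
  (halpha : forall i, hinf_le (Mhat (Gzd i) (Gzu i) (Gyd i) (Gyu i) (Khat i)) (alpha i))
  (hbeta : forall i, hinf_le (Mhat (Gwd i) (Gwu i) (Gyd i) (Gyu i) (Khat i)) (beta i))
  (* T is the closed-loop map d |-> z of the whole network system *)
  (hT : forall (d : 'cV[ratf C]_(\sum_i nd i)) (v : 'cV[ratf C]_(\sum_i nv i))
               (w : 'cV[ratf C]_(\sum_i nw i)) (z : 'cV[ratf C]_(\sum_i nz i))
               (y : 'cV[ratf C]_(\sum_i ny i)) (u : 'cV[ratf C]_(\sum_i nu i)),
      (forall i,
        [/\ submxcol w i = Gwv i *m submxcol v i + Gwd i *m submxcol d i
                           + Gwu i *m submxcol u i,
            submxcol z i = Gzv i *m submxcol v i + Gzd i *m submxcol d i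
                           + Gzu i *m submxcol u i,
            submxcol y i = Gyv i *m submxcol v i + Gyd i *m submxcol d i
                           + Gyu i *m submxcol u i &
            submxcol u i = Khat i *m (row_mx 1%:M (- Gyv i)
                                        *m col_mx (submxcol y i) (submxcol v i))]) ->
      v = L *m w ->
      z = T *m d) :
  hinf_le T (bigmax alpha + delta * bigmax beta).
Proof.
have Khat_unit i : 1%:M - Gyu i *m Khat i \in unitmx := (loop_units (hKstab i).1).2.
have L_unit : 1%:M - L *m bdiag Gwv \in unitmx := (loop_units hpre.1).1.
rewrite (closed_loop_identity Khat_unit L_unit hT).
apply: hinf_le_add; first exact: hinf_le_bdiag.
by apply: hinf_le_mul => //; exact: hinf_le_bdiag.
Qed.
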